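(* Let $G$ be a topological group with identity $e$. The following statements are equivalent: (1) $G$ is an Alexandroff space; (2) $V(e)$ is open; (3) there exist a topological group $E$ carrying the indiscrete topology and a topological group $F$ carrying the discrete topology such that $E\times F$ and $G$ are homeomorphic topological spaces; (4) there exist a topological space $E$ with the indiscrete topology and a discrete topological space $F$ such that $E\times F$ and $G$ are homeomorphic topological spaces.
   Context: For a topological space $X$ and $a\in X$, $V(a):=\bigcap\{U: U\text{ open}, a\in U\}$; $X$ is an Alexandroff space if $V(a)$ is open for every $a\in X$. The indiscrete topology on a set is the topology whose only open sets are the empty set and the whole set. *)

From HB Require Import structures.
From mathcomp Require Import all_boot all_order all_algebra.
From mathcomp Require Import all_classical all_reals topology.
Set Implicit Arguments. Unset Strict Implicit. Unset Printing Implicit Defensive.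
Local Open Scope classical_set_scope.

Definition Vnbhs (X : topologicalType) (a : X) : set X :=
  \bigcap_(U in [set U : set X | open U /\ U a]) U.

Definition alexandroff (X : topologicalType) : Prop :=
  forall a : X, open (Vnbhs a).

Definition indiscrete (X : topologicalType) : Prop :=
  forall A : set X, open A -> A = set0 \/ A = setT.

Definition discrete (X : topologicalType) : Prop :=
  forall A : set X, open A.

Definition homeomorphic (X Y : topologicalType) : Prop :=
  exists (f : X -> Y) (g : Y -> X),
    cancel f g /\ cancel g f /\ continuous f /\ continuous g.

Record is_topgroup (T : topologicalType) (mul : T -> T -> T) (inv : T -> T)
    (e : T) : Prop := IsTopGroup {
  tg_mulA : forall x y z, mul x (mul y z) = mul (mul x y) z;
  tg_mul1l : forall x, mul e x = x;
  tg_mul1r : forall x, mul x e = x;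
  tg_mulVl : forall x, mul (inv x) x = e;
  tg_mulVr : forall x, mul x (inv x) = e;
  tg_mul_cont : continuous (fun p : T * T => mul p.1 p.2);
  tg_inv_cont : continuous inv
}.

Definition topgroup (T : topologicalType) : Prop :=
  exists (mul : T -> T -> T) (inv : T -> T) (e : T), is_topgroup mul inv e.

(** V(a) consists of the points x such that every open set containing a
   contains x; this relation is preserved by continuous maps.  In a
   topological group it is an equivalence relation, symmetric because
   y |-> x y^-1 a is a homeomorphism exchanging a and x, and right translation
   by a^-1 maps V(a) onto V(e), so G is Alexandroff as soon as V(e) is open.
   In that case the subgroup V(e) is a topological group for the indiscrete
   topology, the quotient by the equivalence is discrete since its classes
   V(a) are open, and choosing a representative of each class gives the
   homeomorphism V(e) x G/V(e) -> G, (n, t) |-> n * repr t.  Conversely, in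
   E x F with E indiscrete and F discrete, V(p) = E x {p.2} is open, and being
   Alexandroff is preserved by homeomorphisms. *)

From HB Require Import structures.
From mathcomp Require Import all_boot all_order all_algebra.
From mathcomp Require Import all_classical all_reals topology.
Local Open Scope classical_set_scope.
Local Open Scope quotient_scope.

Section Specialization.
Context {X : topologicalType}.
Implicit Types (a b x : X) (U : set X).

Lemma Vnbhs_refl a : Vnbhs a a.
Proof. by move=> U []. Qed.

Lemma Vnbhs_trans {a b x} : Vnbhs a b -> Vnbhs b x -> Vnbhs a x.
Proof. by move=> Vb Vx U [oU Ua]; apply: Vx; split => //; apply: Vb. Qed.

Lemma nbhs_Vnbhs {a x U} : nbhs a U -> Vnbhs a x -> U x.
Proof.
move=> Ua Vx; apply: interior_subset; apply: Vx; split => //.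
exact: open_interior.
Qed.

Lemma alexandroff_nbhs_Vnbhs a : alexandroff X -> nbhs a (Vnbhs a).
Proof.
by move=> aX; apply: open_nbhs_nbhs; split; [exact: aX | exact: Vnbhs_refl].
Qed.

End Specialization.

Lemma continuous_Vnbhs {X Y : topologicalType} {f : X -> Y} {a x : X} :
  continuous f -> Vnbhs a x -> Vnbhs (f a) (f x).
Proof.
move=> cf Vx U [oU Ufa]; apply: (Vx (f @^-1` U)); split => //.
exact: (proj1 (continuousP f) cf).
Qed.

Lemma homeomorphic_alexandroff {X Y : topologicalType} :
  homeomorphic X Y -> alexandroff X -> alexandroff Y.
Proof.
move=> [f [g [fK [gK [cf cg]]]]] aX y.
have -> : Vnbhs y = g @^-1` Vnbhs (g y).
  apply/seteqP; split=> x; first exact: continuous_Vnbhs.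
  by move=> /(continuous_Vnbhs cf); rewrite !gK.
exact: (proj1 (continuousP g) cg).
Qed.

Lemma nbhs_indiscrete {X : topologicalType} {x : X} {A : set X} :
  indiscrete X -> nbhs x A -> A = setT.
Proof.
move=> iX xA; apply/seteqP; split=> // y _; apply: interior_subset.
have [A0|->] := iX _ (@open_interior _ A); last by [].
by have := nbhs_singleton (nbhs_interior xA); rewrite A0.
Qed.

Lemma alexandroff_indiscrete_discrete {E F : topologicalType} :
  indiscrete E -> discrete F -> alexandroff (E * F)%type.
Proof.
move=> iE dF p.
have snd_continuous : continuous (@snd E F) by move=> q; exact: cvg_snd.
have -> : Vnbhs p = snd @^-1` [set p.2].
  apply/seteqP; split=> [q|q /= qp U [oU Up]].
    by apply; split=> //; exact: (proj1 (continuousP _) snd_continuous).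
  have [[Q R] /= [Qp Rp] QRU] := open_nbhs_nbhs (conj oU Up).
  apply: QRU; split; first by rewrite (nbhs_indiscrete iE Qp).
  by rewrite /= qp; exact: nbhs_singleton.
exact: (proj1 (continuousP _) snd_continuous).
Qed.

Definition indiscrete_topology (T : Type) : Type := T.

Section IndiscreteTopology.
Variable T : choiceType.

HB.instance Definition _ := Choice.copy (indiscrete_topology T) T.

Definition indiscrete_open : set_system T := [set A | A = set0 \/ A = setT].

Lemma indiscrete_openT : indiscrete_open setT.
Proof. by right. Qed.

Lemma indiscrete_openI : setI_closed indiscrete_open.
Proof.
by move=> A B [|] -> [|] ->; rewrite ?set0I ?setI0 ?setIT; [left|left|left|right].
Qed.

Lemma indiscrete_openU (I : Type) (f : I -> set T) :
  (forall i, indiscrete_open (f i)) -> indiscrete_open (\bigcup_i f i).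
Proof.
move=> fo; have [[i fiT]|nT] := pselect (exists i, f i = setT).
  by right; apply/seteqP; split=> // x _; exists i; rewrite ?fiT.
left; apply/seteqP; split=> // x [i _ fx].
by case: (fo i) => fi; [rewrite fi in fx | case: nT; exists i].
Qed.

HB.instance Definition _ := isOpenTopological.Build (indiscrete_topology T)
  indiscrete_openT indiscrete_openI indiscrete_openU.

Lemma indiscrete_topology_indiscrete : indiscrete (indiscrete_topology T).
Proof. by []. Qed.

Lemma indiscrete_continuous {X : topologicalType}
  (f : X -> indiscrete_topology T) : continuous f.
Proof.
by move=> x A /(nbhs_indiscrete indiscrete_topology_indiscrete) ->; exact: filterT.
Qed.

End IndiscreteTopology.

Lemma isolated_continuous {X Y : topologicalType} (f : X -> Y) (x : X) :
  nbhs x [set x] -> {for x, continuous f}.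
Proof. by move=> x1 U /nbhs_singleton Ufx; apply: filterS x1 => _ ->. Qed.

Lemma discrete_continuous {X : discreteTopologicalType} {Y : topologicalType}
  (f : X -> Y) : continuous f.
Proof. by move=> x; apply: isolated_continuous; exact: discrete_set1. Qed.

Lemma discrete2_continuous {X Y : discreteTopologicalType} {Z : topologicalType}
  (f : X * Y -> Z) : continuous f.
Proof.
move=> [x y]; apply: isolated_continuous.
exists ([set x], [set y]); first by split; exact: discrete_set1.
by move=> [? ?] [/= -> ->].
Qed.

Section TopologicalGroup.
Context {G : topologicalType} {mul : G -> G -> G} {inv : G -> G} {e : G}.
Hypothesis hG : is_topgroup mul inv e.
Implicit Types a c x y : G.

Local Notation "x * y" := (mul x y).
Local Notation "x ^-1" := (inv x).

Let mulA := tg_mulA hG.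
Let mul1g := tg_mul1l hG.
Let mulg1 := tg_mul1r hG.
Let mulVg := tg_mulVl hG.
Let mulgV := tg_mulVr hG.
Let mul_cont : continuous (fun p : G * G => p.1 * p.2) := @tg_mul_cont _ _ _ _ hG.
Let inv_cont : continuous inv := @tg_inv_cont _ _ _ _ hG.

Lemma tg_mulgK x y : x * y * y^-1 = x.
Proof. by rewrite -mulA mulgV mulg1. Qed.

Lemma tg_mulgKV x y : x * y^-1 * y = x.
Proof. by rewrite -mulA mulVg mulg1. Qed.

Lemma tg_invg1 : e^-1 = e.
Proof. by rewrite -[LHS]mul1g mulgV. Qed.

Lemma continuous_mull a : continuous (mul a).
Proof.
move=> x; apply: (@continuous_comp _ _ _ (pair a) (fun p : G * G => p.1 * p.2)).
  by apply: cvg_pair; [exact: cvg_cst | exact: cvg_id].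
exact: mul_cont.
Qed.

Lemma continuous_mulr a : continuous (mul^~ a).
Proof.
move=> x; apply: (@continuous_comp _ _ _ (pair^~ a) (fun p : G * G => p.1 * p.2)).
  by apply: cvg_pair; [exact: cvg_id | exact: cvg_cst].
exact: mul_cont.
Qed.

Lemma Vnbhs_mulr c {a x} : Vnbhs a x -> Vnbhs (a * c) (x * c).
Proof. exact: (continuous_Vnbhs (continuous_mulr c)). Qed.

Lemma Vnbhs_mull c {a x} : Vnbhs a x -> Vnbhs (c * a) (c * x).
Proof. exact: (continuous_Vnbhs (continuous_mull c)). Qed.

Lemma Vnbhs_inv {a x} : Vnbhs a x -> Vnbhs a^-1 x^-1.
Proof. exact: (continuous_Vnbhs inv_cont). Qed.

Lemma Vnbhs_sym {a x} : Vnbhs a x -> Vnbhs x a.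
Proof.
move=> /Vnbhs_inv /(Vnbhs_mull x) /(Vnbhs_mulr a).
by rewrite tg_mulgKV mulgV mul1g.
Qed.

Lemma VnbhsE a x : Vnbhs a x <-> Vnbhs e (x * a^-1).
Proof.
split=> [/(Vnbhs_mulr a^-1)|/(Vnbhs_mulr a)]; first by rewrite mulgV.
by rewrite mul1g tg_mulgKV.
Qed.

Lemma open_Vnbhs1_alexandroff : open (Vnbhs e) -> alexandroff G.
Proof.
move=> oV a; have -> : Vnbhs a = mul^~ a^-1 @^-1` Vnbhs e.
  by rewrite predeqE => x; exact: VnbhsE.
exact: (proj1 (continuousP _) (continuous_mulr _)).
Qed.

Lemma Vnbhs1M {x y} : Vnbhs e x -> Vnbhs e y -> Vnbhs e (x * y).
Proof. by move=> /(Vnbhs_mulr y); rewrite mul1g => Vy /Vnbhs_trans; apply. Qed.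

Lemma Vnbhs1V {x} : Vnbhs e x -> Vnbhs e x^-1.
Proof. by move=> /Vnbhs_inv; rewrite tg_invg1. Qed.

Local Notation Vsub := {x : G | `[< Vnbhs e x >]}.

Definition Vsub_mul (x y : Vsub) : Vsub :=
  exist _ (val x * val y)
    (asboolT (Vnbhs1M (asboolW (valP x)) (asboolW (valP y)))).

Definition Vsub_inv (x : Vsub) : Vsub :=
  exist _ (val x)^-1 (asboolT (Vnbhs1V (asboolW (valP x)))).

Definition Vsub_one : Vsub := exist _ e (asboolT (Vnbhs_refl e)).

Lemma Vsub_topgroup :
  @is_topgroup (indiscrete_topology Vsub) Vsub_mul Vsub_inv Vsub_one.
Proof.
split=> [x y z|x|x|x|x||]; try apply: val_inj.
- exact: mulA.
- exact: mul1g.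
- exact: mulg1.
- exact: mulVg.
- exact: mulgV.
- exact: indiscrete_continuous.
- exact: indiscrete_continuous.
Qed.

Definition Vrel : rel G := fun x y => `[< Vnbhs x y >].

Lemma VrelP x y : reflect (Vnbhs x y) (Vrel x y).
Proof. exact: asboolP. Qed.

Lemma Vrel_refl : reflexive Vrel.
Proof. by move=> x; apply/VrelP; exact: Vnbhs_refl. Qed.

Lemma Vrel_sym : symmetric Vrel.
Proof. by move=> x y; apply/VrelP/VrelP; exact: Vnbhs_sym. Qed.

Lemma Vrel_trans : transitive Vrel.
Proof.
by move=> y x z /VrelP xy /VrelP yz; apply/VrelP; exact: Vnbhs_trans xy yz.
Qed.

Canonical Vequiv := EquivRel Vrel Vrel_refl Vrel_sym Vrel_trans.

Local Notation Vquot := {eq_quot Vequiv}.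

Lemma pi_Vnbhs {a x} : Vnbhs a x -> \pi_Vquot a = \pi_Vquot x.
Proof. by move=> Vx; apply/eqmodP/VrelP. Qed.

Lemma Vnbhs_repr x : Vnbhs x (repr (\pi_Vquot x)).
Proof. by apply/VrelP; rewrite Vrel_sym; apply/eqmodP; rewrite reprK. Qed.

Definition Vquot_mul (s t : Vquot) : Vquot := \pi_Vquot (repr s * repr t).

Definition Vquot_inv (s : Vquot) : Vquot := \pi_Vquot (repr s)^-1.

Lemma pi_mul x y : \pi_Vquot (x * y) = Vquot_mul (\pi x) (\pi y).
Proof.
apply: pi_Vnbhs; apply: (Vnbhs_trans (Vnbhs_mulr y (Vnbhs_repr x))).
exact: Vnbhs_mull (Vnbhs_repr y).
Qed.

Lemma pi_inv x : \pi_Vquot x^-1 = Vquot_inv (\pi x).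
Proof. exact: pi_Vnbhs (Vnbhs_inv (Vnbhs_repr x)). Qed.

Lemma Vquot_topgroup :
  @is_topgroup (discrete_topology Vquot) Vquot_mul Vquot_inv (\pi e).
Proof.
split.
- by elim/quotW=> x; elim/quotW=> y; elim/quotW=> z; rewrite -!pi_mul mulA.
- by elim/quotW=> x; rewrite -pi_mul mul1g.
- by elim/quotW=> x; rewrite -pi_mul mulg1.
- by elim/quotW=> x; rewrite -pi_inv -pi_mul mulVg.
- by elim/quotW=> x; rewrite -pi_inv -pi_mul mulgV.
- exact: discrete2_continuous.
- exact: discrete_continuous.
Qed.

Lemma Vnbhs1_mulVrepr x : Vnbhs e (x * (repr (\pi_Vquot x))^-1).
Proof.
have := Vnbhs_mulr (repr (\pi_Vquot x))^-1 (Vnbhs_sym (Vnbhs_repr x)).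
by rewrite mulgV.
Qed.

Local Notation EF := (indiscrete_topology Vsub * discrete_topology Vquot)%type.

Definition coset_split (x : G) : EF :=
  (exist _ (x * (repr (\pi_Vquot x))^-1) (asboolT (Vnbhs1_mulVrepr x)),
   \pi_Vquot x).

Definition coset_join (p : EF) : G := val p.1 * repr p.2.

Lemma coset_splitK : cancel coset_split coset_join.
Proof. by move=> x; rewrite /coset_join /= tg_mulgKV. Qed.

Lemma coset_joinK : cancel coset_join coset_split.
Proof.
move=> [n t]; rewrite /coset_split /coset_join /=.
have nt_t : \pi_Vquot (val n * repr t) = t.
  rewrite -[RHS]reprK; apply/esym/pi_Vnbhs.
  by have := Vnbhs_mulr (repr t) (asboolW (valP n)); rewrite mul1g.
by congr pair; first apply: val_inj; rewrite /= nt_t ?tg_mulgK.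
Qed.

Lemma coset_join_continuous : continuous coset_join.
Proof.
move=> [n t] U /= /nbhs_Vnbhs Un; exists (setT, [set t]).
  by split; [exact: filterT | exact: discrete_set1].
move=> [n' t'] [_ /= ->]; apply: Un; apply: Vnbhs_mulr.
exact: Vnbhs_trans (Vnbhs_sym (asboolW (valP n))) (asboolW (valP n')).
Qed.

Lemma coset_split_continuous : open (Vnbhs e) -> continuous coset_split.
Proof.
move=> oV x W [[Q R] /= [Qx Rx] QRW].
apply: filterS (alexandroff_nbhs_Vnbhs x (open_Vnbhs1_alexandroff oV)) => y xy.
apply: QRW; split=> /=.
  by rewrite (nbhs_indiscrete (indiscrete_topology_indiscrete _) Qx).
by rewrite -(pi_Vnbhs xy); exact: nbhs_singleton Rx.
Qed.

Lemma open_Vnbhs1_split : open (Vnbhs e) ->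
  exists E F : topologicalType, topgroup E /\ indiscrete E /\
    topgroup F /\ discrete F /\ homeomorphic (E * F)%type G.
Proof.
move=> oV; exists (indiscrete_topology Vsub), (discrete_topology Vquot); split.
  by exists Vsub_mul, Vsub_inv, Vsub_one; exact: Vsub_topgroup.
split; first exact: indiscrete_topology_indiscrete.
split; first by exists Vquot_mul, Vquot_inv, (\pi e); exact: Vquot_topgroup.
split; first exact: discrete_open.
exists coset_join, coset_split; split; first exact: coset_joinK.
split; first exact: coset_splitK.
by split; [exact: coset_join_continuous | exact: coset_split_continuous].
Qed.

End TopologicalGroup.

Theorem mainTheorem10 (G : topologicalType) (mul : G -> G -> G) (inv : G -> G)
    (e : G) (hG : is_topgroup mul inv e) :
  let s1 := alexandroff G in
  let s2 := open (Vnbhs e) in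
  let s3 := exists (E F : topologicalType),
      topgroup E /\ indiscrete E /\ topgroup F /\ discrete F /\
      homeomorphic (E * F)%type G in
  let s4 := exists (E F : topologicalType),
      indiscrete E /\ discrete F /\ homeomorphic (E * F)%type G in
  (s1 <-> s2) /\ (s2 <-> s3) /\ (s3 <-> s4).
Proof.
move=> s1 s2 s3 s4.
have s12 : s1 -> s2 by apply.
have s21 : s2 -> s1 := open_Vnbhs1_alexandroff hG.
have s23 : s2 -> s3 := open_Vnbhs1_split hG.
have s34 : s3 -> s4 by move=> [E [F [_ [iE [_ [dF EF]]]]]]; exists E, F.
have s41 : s4 -> s1.
  move=> [E [F [iE [dF EF]]]].
  exact: homeomorphic_alexandroff EF (alexandroff_indiscrete_discrete iE dF).
by split; [|split]; split; auto.
Qed.
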